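(* Let $\alpha\in[0,1]$ and let $\mathbf u:[0,\infty)\to\mathbb R^N$ be a differentiable solution of $$\frac{d\mathbf u}{dt}+\alpha\, D A\mathbf u+(1-\alpha)\big(A D\mathbf u+U D\mathbf a\big)=\mathbf 0,\qquad U=\operatorname{diag}(\mathbf u).$$ Define the product-rule defect $\Theta:=DA-AD-\operatorname{diag}(D\mathbf a)$ and $\gamma:=\|\operatorname{diag}(D\mathbf a)+(2\alpha-1)\Theta\|_H$. Then for all $t\ge0$ $$\frac{d}{dt}\|\mathbf u\|_H^2=-\mathbf u^T H\big(\operatorname{diag}(D\mathbf a)+(2\alpha-1)\Theta\big)\mathbf u\le\gamma\|\mathbf u\|_H^2,$$ and consequently $\|\mathbf u(t)\|_H^2\le e^{\gamma t}\|\mathbf u(0)\|_H^2$. In particular, for $\alpha=\tfrac12$ one has $\gamma=\|D\mathbf a\|_\infty=\max_i|(D\mathbf a)_i|$.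
   Context: Fix $N\ge2$. $H=\operatorname{diag}(H_{11},\dots,H_{NN})$ with all $H_{ii}>0$; $Q\in\mathbb R^{N\times N}$ satisfies $Q+Q^T=0$ (periodic SBP operator); $D:=H^{-1}Q$. The vector $\mathbf a\in\mathbb R^N$ has entries $a_i>0$ (samples of a positive coefficient $a(x)$ at the nodes) and $A=\operatorname{diag}(\mathbf a)$. For $\mathbf v\in\mathbb R^N$, $\|\mathbf v\|_H^2=\sum_i H_{ii}v_i^2$, and for a matrix $M$, $\|M\|_H=\sup_{\mathbf v\neq0}\|M\mathbf v\|_H/\|\mathbf v\|_H$ (induced norm). *)

From HB Require Import structures.
From mathcomp Require Import all_boot all_order all_algebra.
From mathcomp Require Import all_classical all_reals all_analysis.
Set Implicit Arguments. Unset Strict Implicit. Unset Printing Implicit Defensive.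
Import Order.TTheory GRing.Theory Num.Theory.
Import numFieldNormedType.Exports.
Local Open Scope classical_set_scope.
Local Open Scope ring_scope.

Section Defs.
Variables (R : realType) (N : nat).

Definition Hmat (h : 'cV[R]_N) : 'M[R]_N := diag_mx h^T.

Definition Hnorm2 (h v : 'cV[R]_N) : R := \sum_(i < N) h i 0 * (v i 0) ^+ 2.
Definition Hnorm (h v : 'cV[R]_N) : R := Num.sqrt (Hnorm2 h v).

Definition Hopnorm (h : 'cV[R]_N) (M : 'M[R]_N) : R :=
  sup [set Hnorm h (M *m v) / Hnorm h v | v in [set v : 'cV[R]_N | v != 0]].

Definition Dmat (h : 'cV[R]_N) (Q : 'M[R]_N) : 'M[R]_N := invmx (Hmat h) *m Q.

Definition Theta (h : 'cV[R]_N) (Q : 'M[R]_N) (a : 'cV[R]_N) : 'M[R]_N :=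
  Dmat h Q *m diag_mx a^T - diag_mx a^T *m Dmat h Q - diag_mx (Dmat h Q *m a)^T.

End Defs.

(* Derivative of a real function on [0, oo): at t >= 0, the difference
   quotient converges to l as h -> 0, h <> 0, restricted to t + h >= 0
   (so it is the two-sided derivative for t > 0 and the right derivative
   at t = 0). *)
Definition deriv_nonneg {R : realType} (f : R -> R) (t l : R) : Prop :=
  (fun s : R => s^-1 * (f (t + s) - f t))
    @ within (fun s : R => 0 <= t + s) (0 : R)^' --> l.

From HB Require Import structures.
From mathcomp Require Import all_boot all_order all_algebra.
From mathcomp Require Import all_classical all_reals all_analysis.
From mathcomp Require Import ring lra.
Set Implicit Arguments.
Unset Strict Implicit.
Unset Printing Implicit Defensive.

Import Order.TTheory GRing.Theory Num.Theory.
Import numFieldNormedType.Exports.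
Local Open Scope classical_set_scope.
Local Open Scope ring_scope.

(* Energy method.  Since H D = Q is skew-symmetric (summation by parts), the
   terms alpha D A u and (1 - alpha) A D u contribute to d/dt u^T H u only
   through (2 alpha - 1) D A u, which is how the product-rule defect Theta
   enters: d/dt ||u||_H^2 = - u^T H B u with B = diag(D a) + (2 alpha - 1) Theta.
   Cauchy-Schwarz in the H-inner product bounds the right-hand side by
   ||B||_H ||u||_H^2, and Gronwall's lemma gives the exponential bound.  For
   alpha = 1/2 the matrix B is diagonal, and the induced H-norm of a diagonal
   matrix is its largest entry in absolute value, attained at a unit vector. *)

Section DerivNonneg.
Variable R : realType.
Implicit Types (f df : R -> R) (t l g : R).
Local Notation at_nonneg t := (within (fun s : R => 0 <= t + s) (0 : R)^').

Lemma deriv_nonneg_cvg f t l : deriv_nonneg f t l ->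
  (fun s => f (t + s)) @ at_nonneg t --> f t.
Proof.
move=> dfl.
have eq_f : {near at_nonneg t,
    (fun s => f t + s * (s^-1 * (f (t + s) - f t))) =1 (fun s => f (t + s))}.
  rewrite near_withinE /dnbhs near_withinE; apply: nearW => s /= s0 _.
  by rewrite mulrA mulfV // mul1r addrC subrK.
apply: cvg_trans (near_eq_cvg eq_f) _.
suff : (fun s => f t + s * (s^-1 * (f (t + s) - f t))) @ at_nonneg t
    --> f t + 0 * l by rewrite mul0r addr0.
apply: cvgD; first exact: cvg_cst.
apply: cvgM => //.
by do 2 apply: cvg_within_filter; exact: cvg_id.
Qed.

Lemma deriv_nonneg_is_derive f t l : 0 < t -> deriv_nonneg f t l ->
  is_derive t 1 f l.
Proof.
move=> t_gt0 dfl.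
have dfl0 : (fun s => s^-1 * (f (t + s) - f t)) @ 0^' --> l.
  apply: cvg_trans dfl; apply: cvg_fmap2 => A; rewrite /within /= => A0.
  have nonneg : \forall s \near 0^', 0 <= t + s.
    apply: nbhs_dnbhs; exists t => //= s; rewrite /ball /= sub0r normrN.
    by move/ltr_normlP => [? _]; lra.
  by apply: filterS2 nonneg A0 => s s_nonneg; apply.
have quotE : (fun s : R => s^-1 *: ((f \o shift t) (s *: 1) - f t)) =
             (fun s => s^-1 * (f (t + s) - f t)).
  by apply/funext => s /=; rewrite (addrC t) [s *: 1]mulr1.
split; first by rewrite /derivable quotE; exact: cvgP dfl0.
by rewrite /derive quotE; exact: cvg_lim.
Qed.

Lemma deriv_nonneg_cvg_at_right0 f l : deriv_nonneg f 0 l -> f @ 0^'+ --> f 0.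
Proof.
move=> /deriv_nonneg_cvg; under eq_fun do rewrite add0r.
apply: cvg_trans; apply: cvg_fmap2 => A A0.
apply: filterS (A0 : nbhs 0 (fun y : R => y != 0 -> 0 <= 0 + y -> A y)).
by move=> s As s_gt0; apply: As; [exact: lt0r_neq0 | rewrite add0r ltW].
Qed.

Lemma is_derive_expR_scale (c x : R) :
  is_derive x 1 (fun s => expR (c * s)) (expR (c * x) * c).
Proof.
have : is_derive x 1 ( *%R c) c.
  by apply: is_derive_eq; rewrite /GRing.scale /= mulr1.
exact: (is_derive1_comp (f := expR) (g := *%R c)).
Qed.

(* Gronwall: [t |-> e^{-g t} f t] has nonpositive derivative on (0, oo). *)
Lemma deriv_nonneg_gronwall f df g :
  (forall t, 0 <= t -> deriv_nonneg f t (df t)) ->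
  (forall t, 0 <= t -> df t <= g * f t) ->
  forall t, 0 <= t -> f t <= expR (g * t) * f 0.
Proof.
move=> dff df_le t; rewrite le_eqVlt => /predU1P[<-|t_gt0].
  by rewrite mulr0 expR0 mul1r.
pose E (s : R) := expR (- g * s).
pose dG (x : R) := E x *: df x + f x *: (E x * - g).
have dEf (x : R) : 0 < x -> is_derive x 1 (E * f) (dG x).
  move=> x_gt0; apply: is_deriveM; first exact: is_derive_expR_scale.
  exact: deriv_nonneg_is_derive x_gt0 (dff x (ltW x_gt0)).
have Ef_cont (x : R) : 0 < x -> {for x, continuous (E * f)}.
  move=> /dEf [dx _]; apply: differentiable_continuous.
  exact/derivable1_diffP.
have E_cont0 : {for 0, continuous E}.
  have [dE0 _] := is_derive_expR_scale (- g) 0.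
  exact/differentiable_continuous/derivable1_diffP.
have Ef_cont_itv : {within `[0, t], continuous (E * f)}.
  apply/continuous_within_itvP => //; split.
  - by move=> x /[!in_itv] /= /andP[x_gt0 _]; exact: Ef_cont.
  - apply: cvgM; first exact: cvg_at_right_filter E_cont0.
    exact: deriv_nonneg_cvg_at_right0 (dff 0 (lexx 0)).
  - exact: cvg_at_left_filter (Ef_cont t t_gt0).
have [c /[!in_itv] /andP[c_gt0 _] EfE] :=
  MVT t_gt0 (fun x x_in => dEf x (andP x_in).1) Ef_cont_itv.
have dG_le0 : dG c <= 0.
  rewrite /dG /GRing.scale /= [X in X <= _](_ : _ = (df c - g * f c) * E c).
    by rewrite mulr_le0_ge0 ?expR_ge0 // subr_le0 df_le // ltW.
  by ring.
have : E t * f t <= E 0 * f 0.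
  by rewrite -subr_le0 -[_ - _]/((E * f) t - (E * f) 0) EfE mulr_le0_ge0 // subr0 ltW.
rewrite /E mulr0 expR0 mul1r mulNr expRN => Ef_le.
by rewrite -ler_pdivrMl ?invr_gt0 ?expR_gt0 // invrK.
Qed.

End DerivNonneg.

Lemma weighted_cauchy_schwarz {R : realFieldType} {I : finType} (w x y : I -> R) :
  (forall i, 0 <= w i) ->
  (\sum_i w i * (x i * y i)) ^+ 2
    <= (\sum_i w i * x i ^+ 2) * (\sum_i w i * y i ^+ 2).
Proof.
move=> w_ge0.
set A := \sum_i _ * x i ^+ 2; set B := \sum_i _ * y i ^+ 2; set C := \sum_i _.
have A_ge0 : 0 <= A by apply: sumr_ge0 => i _; rewrite mulr_ge0 ?sqr_ge0.
have [A0|A_neq0] := eqVneq A 0.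
  have wx0 i : w i * x i = 0.
    have wx20 : w i * x i ^+ 2 = 0.
      by apply: (psumr_eq0P _ A0) => // j _; rewrite mulr_ge0 ?sqr_ge0.
    apply/eqP; rewrite -sqrf_eq0.
    have -> : (w i * x i) ^+ 2 = w i * (w i * x i ^+ 2) by ring.
    by rewrite wx20 mulr0.
  by rewrite A0 mul0r /C big1 ?expr0n // => i _; rewrite mulrA wx0 mul0r.
have : 0 <= \sum_i w i * (C * x i - A * y i) ^+ 2.
  by apply: sumr_ge0 => i _; rewrite mulr_ge0 ?sqr_ge0.
have -> : \sum_i w i * (C * x i - A * y i) ^+ 2 = A * (A * B - C ^+ 2).
  have expand i : w i * (C * x i - A * y i) ^+ 2 = C ^+ 2 * (w i * x i ^+ 2)
      + - (2 * C * A) * (w i * (x i * y i)) + A ^+ 2 * (w i * y i ^+ 2) by ring.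
  under eq_bigr => i _ do rewrite expand.
  by rewrite !big_split /= -!mulr_sumr -/A -/B -/C; ring.
by rewrite pmulr_rge0 ?lt_def ?A_neq0 // subr_ge0 mulrC.
Qed.

Lemma sqrtr_divr_le (R : rcfType) (p n c : R) : 0 < n -> 0 <= c ->
  (Num.sqrt p / Num.sqrt n <= c) = (p <= c ^+ 2 * n).
Proof.
move=> n_gt0 c_ge0.
rewrite ler_pdivrMr ?sqrtr_gt0 // -[c in c * _]ger0_norm // -sqrtr_sqr.
by rewrite -sqrtrM ?sqr_ge0 // ler_sqrt // mulr_ge0 ?sqr_ge0 // ltW.
Qed.


Section HNorm.
Variables (R : realType) (N : nat) (h : 'cV[R]_N).
Hypothesis h_gt0 : forall i, 0 < h i 0.

Definition Hform (M : 'M[R]_N) (x : 'cV[R]_N) : R := (x^T *m Hmat h *m M *m x) 0 0.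

Lemma HformD (M1 M2 : 'M[R]_N) x : Hform (M1 + M2) x = Hform M1 x + Hform M2 x.
Proof. by rewrite /Hform mulmxDr mulmxDl mxE. Qed.

Lemma HformN (M : 'M[R]_N) x : Hform (- M) x = - Hform M x.
Proof. by rewrite /Hform mulmxN mulNmx mxE. Qed.

Lemma HformZ k (M : 'M[R]_N) x : Hform (k *: M) x = k * Hform M x.
Proof. by rewrite /Hform -scalemxAr -scalemxAl mxE. Qed.

Lemma HdotE (x y : 'cV[R]_N) :
  (x^T *m Hmat h *m y) 0 0 = \sum_i h i 0 * (x i 0 * y i 0).
Proof.
by rewrite /Hmat mul_mx_diag !mxE; apply: eq_bigr => i _; rewrite !mxE mulrAC mulrC.
Qed.

Lemma Hmat_unit : Hmat h \in unitmx.
Proof.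
by rewrite unitmxE det_diag unitfE; apply/prodf_neq0 => i _; rewrite mxE gt_eqF.
Qed.

Lemma Hnorm2_ge0 (v : 'cV[R]_N) : 0 <= Hnorm2 h v.
Proof. by apply: sumr_ge0 => i _; rewrite mulr_ge0 ?sqr_ge0 ?ltW. Qed.

Lemma Hnorm2_0 : Hnorm2 h 0 = 0.
Proof. by rewrite /Hnorm2 big1 // => i _; rewrite mxE expr0n mulr0. Qed.

Lemma Hnorm2_gt0 (v : 'cV[R]_N) : v != 0 -> 0 < Hnorm2 h v.
Proof.
move=> v_neq0; have [k vk_neq0] : exists k, v k 0 != 0.
  apply/existsP; apply: contraR v_neq0 => /existsPn v0.
  by apply/eqP/matrixP => i j; rewrite (ord1 j) mxE; apply/eqP/negPn/v0.
rewrite /Hnorm2 (bigD1 k) //= ltr_pwDl //.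
  by rewrite mulr_gt0 ?exprn_even_gt0 ?vk_neq0 ?orbT.
by apply: sumr_ge0 => i _; rewrite mulr_ge0 ?sqr_ge0 ?ltW.
Qed.

Lemma Hnorm2_mulmx_le_const (M : 'M[R]_N) :
  exists2 K, 0 <= K & forall v, Hnorm2 h (M *m v) <= K * Hnorm2 h v.
Proof.
pose K i := \sum_j h j 0 * (M i j / h j 0) ^+ 2.
have K_ge0 i : 0 <= K i by apply: sumr_ge0 => j _; rewrite mulr_ge0 ?sqr_ge0 ?ltW.
exists (\sum_i h i 0 * K i) => [|v].
  by apply: sumr_ge0 => i _; rewrite mulr_ge0 ?K_ge0 ?ltW.
rewrite /Hnorm2 mulr_suml; apply: ler_sum => i _.
rewrite -mulrA; apply: ler_wpM2l; first exact: ltW.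
have -> : (M *m v) i 0 = \sum_j h j 0 * (M i j / h j 0 * v j 0).
  by rewrite mxE; apply: eq_bigr => j _; rewrite mulrA mulrCA mulfV ?mulr1 ?gt_eqF.
exact: (weighted_cauchy_schwarz (fun j => M i j / h j 0)
  (fun j => v j 0) (fun j => ltW (h_gt0 j))).
Qed.

Lemma Hopnorm_ub (M : 'M[R]_N) (v : 'cV[R]_N) : v != 0 ->
  Hnorm h (M *m v) / Hnorm h v <= Hopnorm h M.
Proof.
move=> v_neq0; apply: ub_le_sup; last by exists v.
have [K K_ge0 MK] := Hnorm2_mulmx_le_const M.
exists (Num.sqrt K) => _ [w w_neq0 <-].
by rewrite sqrtr_divr_le ?Hnorm2_gt0 ?sqrtr_ge0 // sqr_sqrtr.
Qed.

Lemma Hopnorm_ge0 (M : 'M[R]_N) : (0 < N)%N -> 0 <= Hopnorm h M.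
Proof.
move=> N_gt0; have one_neq0 : const_mx 1 != 0 :> 'cV[R]_N.
  by apply/eqP => /matrixP/(_ (Ordinal N_gt0) 0); rewrite !mxE; exact/eqP/oner_neq0.
by apply: le_trans _ (Hopnorm_ub M one_neq0); rewrite divr_ge0 ?sqrtr_ge0.
Qed.

Lemma Hnorm2_mulmx_le (M : 'M[R]_N) (v : 'cV[R]_N) : (0 < N)%N ->
  Hnorm2 h (M *m v) <= Hopnorm h M ^+ 2 * Hnorm2 h v.
Proof.
move=> N_gt0; have [->|v_neq0] := eqVneq v 0.
  by rewrite mulmx0 Hnorm2_0 mulr0.
by rewrite -sqrtr_divr_le ?Hnorm2_gt0 ?Hopnorm_ge0 ?Hopnorm_ub.
Qed.

Lemma Hform_le (M : 'M[R]_N) (x : 'cV[R]_N) : (0 < N)%N ->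
  `|Hform M x| <= Hopnorm h M * Hnorm2 h x.
Proof.
move=> N_gt0; have g_ge0 := Hopnorm_ge0 M N_gt0.
have cs := weighted_cauchy_schwarz (fun i => x i 0) (fun i => (M *m x) i 0)
  (fun i => ltW (h_gt0 i)).
rewrite /Hform -mulmxA HdotE -ler_sqr ?nnegrE ?mulr_ge0 ?Hnorm2_ge0 //.
rewrite real_normK ?num_real // (le_trans cs) // -/(Hnorm2 h x) -/(Hnorm2 h _).
rewrite exprMn [Hnorm2 h x ^+ 2]expr2 mulrCA.
by apply: ler_wpM2l; [exact: Hnorm2_ge0 | exact: Hnorm2_mulmx_le].
Qed.

Lemma Hnorm2_diag_mulmx (d v : 'cV[R]_N) :
  Hnorm2 h (diag_mx d^T *m v) = \sum_i d i 0 ^+ 2 * (h i 0 * v i 0 ^+ 2).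
Proof. by apply: eq_bigr => i _; rewrite mul_diag_mx !mxE; ring. Qed.

Lemma Hopnorm_diag (d : 'cV[R]_N) : (0 < N)%N ->
  Hopnorm h (diag_mx d^T) = \big[Num.max/0]_(i < N) `|d i 0|.
Proof.
move=> N_gt0; set m := \big[Num.max/0]_(i < N) _.
have m_ge0 : 0 <= m := bigmax_ge_id _ _ _ _.
have [k _ mE] := @eq_bigmax _ R _ 0 (Ordinal N_gt0) xpredT (fun i => `|d i 0|)
  isT (fun i _ => normr_ge0 _).
pose e : 'cV[R]_N := delta_mx k 0.
have e_neq0 : e != 0.
  by apply/eqP => /matrixP/(_ k 0); rewrite !mxE !eqxx; exact/eqP/oner_neq0.
have sum_e (c : 'I_N -> R) : \sum_i c i * e i 0 ^+ 2 = c k.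
  rewrite (bigD1 k) //= big1 ?addr0 => [|i ik]; first by rewrite mxE !eqxx expr1n mulr1.
  by rewrite mxE (negbTE ik) expr0n mulr0.
apply/le_anti/andP; split.
  apply: ge_sup; first by exists (Hnorm h (diag_mx d^T *m e) / Hnorm h e); exists e.
  move=> _ [v v_neq0 <-]; rewrite sqrtr_divr_le ?Hnorm2_gt0 //.
  rewrite Hnorm2_diag_mulmx /Hnorm2 mulr_sumr; apply: ler_sum => i _.
  apply: ler_wpM2r; first by rewrite mulr_ge0 ?sqr_ge0 ?ltW.
  by rewrite -real_normK ?num_real // lerXn2r ?nnegrE // le_bigmax.
apply: le_trans _ (Hopnorm_ub _ e_neq0).
have -> : Hnorm h (diag_mx d^T *m e) = m * Hnorm h e.
  rewrite /Hnorm Hnorm2_diag_mulmx /Hnorm2; under eq_bigr do rewrite mulrA.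
  by rewrite !sum_e sqrtrM ?sqr_ge0 // sqrtr_sqr -mE.
by rewrite mulfK // gt_eqF // sqrtr_gt0 Hnorm2_gt0.
Qed.

End HNorm.

Lemma deriv_nonneg_Hnorm2 (R : realType) (N : nat) (h : 'cV[R]_N)
    (u du : R -> 'cV[R]_N) (t : R) :
  (forall i, deriv_nonneg (fun s => u s i 0) t (du t i 0)) ->
  deriv_nonneg (fun s => Hnorm2 h (u s)) t (2 * ((u t)^T *m Hmat h *m du t) 0 0).
Proof.
move=> du_u; rewrite HdotE mulr_sumr.
have twice i : 2 * (h i 0 * (u t i 0 * du t i 0))
    = h i 0 * ((u t i 0 + u t i 0) * du t i 0) by ring.
under eq_bigr do rewrite twice.
have -> : (fun s => s^-1 * (Hnorm2 h (u (t + s)) - Hnorm2 h (u t))) =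
    (fun s => \sum_i h i 0 * ((u (t + s) i 0 + u t i 0)
                               * (s^-1 * (u (t + s) i 0 - u t i 0)))).
  by apply/funext => s; rewrite -sumrB mulr_sumr; apply: eq_bigr => i _; ring.
apply: cvg_big => [|i _]; first exact: add_continuous.
apply: cvgM; first exact: cvg_cst.
apply: cvgM; last exact: du_u.
by apply: cvgD; [exact: deriv_nonneg_cvg (du_u i) | exact: cvg_cst].
Qed.

Lemma diag_mx_cV_mulC (S : comPzSemiRingType) (n : nat) (u v : 'cV[S]_n) :
  diag_mx u^T *m v = diag_mx v^T *m u.
Proof. by apply/matrixP => i j; rewrite !mul_diag_mx !mxE (ord1 j) mulrC. Qed.

Section Energy.
Variables (R : realType) (N : nat) (h : 'cV[R]_N) (Q : 'M[R]_N) (a : 'cV[R]_N).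
Hypotheses (h_gt0 : forall i, 0 < h i 0) (Q_skew : Q + Q^T = 0).

Local Notation D := (Dmat h Q).
Local Notation A := (diag_mx a^T).

Lemma Hmat_Dmat : Hmat h *m D = Q.
Proof. by rewrite mulmxA (mulmxV (Hmat_unit h_gt0)) mul1mx. Qed.

(* Summation by parts: H D = Q is skew, and A commutes with H. *)
Lemma Hform_diag_Dmat x : Hform h (A *m D) x = - Hform h (D *m A) x.
Proof.
have HA : Hmat h *m A = A *m Hmat h by rewrite diag_mxC.
have QT : Q^T = - Q by apply/eqP; rewrite -addr_eq0 addrC Q_skew.
rewrite /Hform.
have -> : x^T *m Hmat h *m (A *m D) *m x = x^T *m A *m (Hmat h *m D) *m x.
  by rewrite !mulmxA -(mulmxA x^T (Hmat h)) HA mulmxA.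
have -> : x^T *m Hmat h *m (D *m A) *m x = x^T *m (Hmat h *m D) *m A *m x.
  by rewrite !mulmxA.
rewrite Hmat_Dmat -[x^T *m A *m Q *m x]trmxK [LHS]mxE !trmx_mul trmxK tr_diag_mx QT.
by rewrite mulNmx mulmxN !mulmxA mxE.
Qed.

Lemma energy_identity (alpha : R) (x y : 'cV[R]_N) :
  y + alpha *: (D *m A *m x)
    + (1 - alpha) *: (A *m D *m x + diag_mx x^T *m D *m a) = 0 ->
  2 * (x^T *m Hmat h *m y) 0 0 =
    - Hform h (diag_mx (D *m a)^T + (2 * alpha - 1) *: Theta h Q a) x.
Proof.
rewrite -[diag_mx x^T *m D *m a]mulmxA [diag_mx x^T *m _]diag_mx_cV_mulC.
rewrite -addrA => /eqP; rewrite addr_eq0 => /eqP ->.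
rewrite -mulmxDl (scalemxAl alpha) (scalemxAl (1 - alpha)) -mulmxDl -mulNmx mulmxA -/(Hform h _ x).
rewrite /Theta !(HformN, HformD, HformZ) Hform_diag_Dmat; ring.
Qed.

End Energy.

Theorem mainTheorem1 (R : realType) (N : nat) (hN : (2 <= N)%N)
  (h : 'cV[R]_N) (Q : 'M[R]_N) (a : 'cV[R]_N) (alpha : R)
  (u du : R -> 'cV[R]_N) :
  (forall i, 0 < h i 0) ->
  Q + Q^T = 0 ->
  (forall i, 0 < a i 0) ->
  0 <= alpha <= 1 ->
  (forall t, 0 <= t -> forall i, deriv_nonneg (fun s => u s i 0) t (du t i 0)) ->
  (forall t, 0 <= t ->
     du t + alpha *: (Dmat h Q *m diag_mx a^T *m u t)
     + (1 - alpha) *: (diag_mx a^T *m Dmat h Q *m u t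
                       + diag_mx (u t)^T *m Dmat h Q *m a) = 0) ->
  let B := diag_mx (Dmat h Q *m a)^T + (2 * alpha - 1) *: Theta h Q a in
  let gamma := Hopnorm h B in
  (forall t, 0 <= t ->
     deriv_nonneg (fun s => Hnorm2 h (u s)) t
       (- ((u t)^T *m Hmat h *m B *m u t) 0 0)
     /\ - ((u t)^T *m Hmat h *m B *m u t) 0 0 <= gamma * Hnorm2 h (u t))
  /\ (forall t, 0 <= t -> Hnorm2 h (u t) <= expR (gamma * t) * Hnorm2 h (u 0))
  /\ (alpha = 2^-1 -> gamma = \big[Num.max/0]_(i < N) `|(Dmat h Q *m a) i 0|).
Proof.
move=> h_gt0 Q_skew _ _ du_u u_eq B gamma.
have N_gt0 : (0 < N)%N by apply: leq_trans hN.
have energy_rate t : 0 <= t ->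
    deriv_nonneg (fun s => Hnorm2 h (u s)) t (- Hform h B (u t)).
  move=> t_ge0; rewrite -(energy_identity h_gt0 Q_skew (u_eq t t_ge0)).
  exact: deriv_nonneg_Hnorm2 (du_u t t_ge0).
have rate_le t : - Hform h B (u t) <= gamma * Hnorm2 h (u t).
  by rewrite (le_trans _ (Hform_le h_gt0 B (u t) N_gt0)) // -normrN ler_norm.
split; first by move=> t t_ge0; split; [exact: energy_rate | exact: rate_le].
split; first exact: deriv_nonneg_gronwall energy_rate (fun t _ => rate_le t).
rewrite /gamma /B => ->; rewrite mulfV ?pnatr_eq0 // subrr scale0r addr0.
exact: Hopnorm_diag.
Qed.
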